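(* Let $W_2\in\{M_2,S_2\}$, where $M_2$ is the space of $2\times 2$ real matrices and $S_2$ is the subspace of real symmetric $2\times2$ matrices, and let $\phi:W_2\to W_2$ be a linear map. Then $\phi$ preserves the Lorentz spectrum (i.e. $\sigma_{\mathcal{K}}(\phi(A))=\sigma_{\mathcal{K}}(A)$ for all $A\in W_2$) if and only if either $\phi(A)=PAP^{-1}$ for all $A\in W_2$, or $\phi(A)=QAQ^{-1}$ for all $A\in W_2$, where $$P=\begin{bmatrix}\alpha&\beta\\ \beta&\alpha\end{bmatrix},\qquad Q=\begin{bmatrix}-\alpha&-\beta\\ \beta&\alpha\end{bmatrix}$$ for some $\alpha,\beta\in\mathbb{R}$ with $\alpha^2-\beta^2=1$, and with $\beta=0$ if $W_2=S_2$.
   Context: The Lorentz cone in $\mathbb{R}^2$ is $\mathcal{K}=\{(x_1,x_2)^T\in\mathbb{R}^2:\ |x_1|\le x_2\}$. For $A\in M_2$, a real number $\lambda$ is a Lorentz eigenvalue (L-eigenvalue) of $A$ if there is a nonzero $x\in\mathbb{R}^2$ with $x\in\mathcal{K}$, $(A-\lambda I)x\in\mathcal{K}$ and $x^T(A-\lambda I)x=0$; such $x$ is an L-eigenvector. The Lorentz spectrum $\sigma_{\mathcal{K}}(A)$ is the set of all L-eigenvalues of $A$. *)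

From mathcomp Require Import all_boot all_order all_algebra.
From mathcomp Require Import reals.
Set Implicit Arguments. Unset Strict Implicit. Unset Printing Implicit Defensive.
Import Order.TTheory GRing.Theory Num.Theory.
Local Open Scope ring_scope.

Section Lorentz.
Variable R : realType.

(* Lorentz cone in R^2: (x1,x2)^T with |x1| <= x2; indices 0,1 stand for 1,2. *)
Definition lorentz_cone (x : 'cV[R]_2) : Prop := `|x 0 0| <= x 1 0.

Definition L_eigenvalue (A : 'M[R]_2) (l : R) : Prop :=
  exists x : 'cV[R]_2, [/\ x != 0, lorentz_cone x,
    lorentz_cone ((A - l%:M) *m x) & (x^T *m (A - l%:M) *m x) 0 0 = 0].

Definition L_spectrum (A : 'M[R]_2) : R -> Prop := fun l => L_eigenvalue A l.

Definition same_L_spectrum (A B : 'M[R]_2) : Prop :=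
  forall l, L_spectrum A l <-> L_spectrum B l.

Definition Pmx (a b : R) : 'M[R]_2 :=
  \matrix_(i < 2, j < 2) if i == j then a else b.

Definition Qmx (a b : R) : 'M[R]_2 :=
  \matrix_(i < 2, j < 2)
    if (i == 0 :> nat) then (if (j == 0 :> nat) then - a else - b)
    else (if (j == 0 :> nat) then b else a).

Definition sym2 (A : 'M[R]_2) : Prop := A^T = A.

End Lorentz.

From mathcomp Require Import all_boot all_order all_algebra.
From mathcomp Require Import reals.
From mathcomp Require Import ring lra.
Set Implicit Arguments. Unset Strict Implicit. Unset Printing Implicit Defensive.
Import Order.TTheory GRing.Theory Num.Theory.
Local Open Scope ring_scope.

(** Light-cone coordinates z = ((x1 + x2)/2, (x2 - x1)/2) map the Lorentz cone
    onto the nonnegative orthant, and since this change of basis is orthogonal up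
    to a factor 2, the L-eigenvalues of A are the Pareto eigenvalues (eigenvalues
    complementary with respect to the orthant) of the conjugate matrix B.  For a
    2x2 matrix these are B00 if B10 >= 0, B11 if B01 >= 0, and the eigenvalues
    with a positive eigenvector.
    A linear map preserving Pareto spectra keeps the diagonal of [[x, s], [t, x]]
    when st = 0, and turns the product of its off-diagonal entries into st when
    s, t > 0; hence it fixes I and sends (E12, E21) to (r E12, E21 / r) or to
    (E21 / r, r E12).  After undoing this by a diagonal (and exchange)
    conjugation the map fixes I, E12 and E21, and a few test matrices show that
    it is the identity.  In light-cone coordinates P and Q become diag(a+b, a-b)
    and an antidiagonal matrix, whose conjugations are exactly these maps.
    On symmetric matrices the argument is the same, with E11, E22 and
    [[0, 1], [1, 0]] being the only symmetric matrices with Pareto spectrum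
    {0, 1}; this leaves the identity and the exchange. *)

(** * Eigenvalues relative to a cone *)

Section ConeEigenvalue.
Variables (R : realType) (n : nat).

Definition cone_eigenvalue (K : 'cV[R]_n -> Prop) (A : 'M[R]_n) (l : R) : Prop :=
  exists x : 'cV[R]_n, [/\ x != 0, K x,
    K ((A - l%:M) *m x) & (x^T *m (A - l%:M) *m x) 0 0 = 0].

Variables (K C : 'cV[R]_n -> Prop) (S T : 'M[R]_n) (c : R).
Hypotheses (ST : S *m T = 1%:M) (TS : T *m S = 1%:M).
Hypotheses (trT : T^T = c *: S) (c_neq0 : c != 0).
Hypothesis KC : forall x, K x <-> C (S *m x).

Lemma conj_sub_scalar (A : 'M[R]_n) (l : R) :
  S *m (A - l%:M) *m T = S *m A *m T - l%:M.
Proof. by rewrite mulmxBr mulmxBl mul_mx_scalar -scalemxAl ST scalemx1. Qed.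

(* As [T^T] is a multiple of [S = T^-1], the quadratic form is only rescaled. *)
Lemma cone_eigenvalue_conj (A : 'M[R]_n) (l : R) :
  cone_eigenvalue K A l <-> cone_eigenvalue C (S *m A *m T) l.
Proof.
have trS : S^T = c^-1 *: T.
  by rewrite -[in RHS](trmxK T) trT linearZ /= scalerA mulVf // scale1r.
rewrite /cone_eigenvalue -conj_sub_scalar; split.
- case=> x [x0 Kx KAx qx]; exists (S *m x); split.
  + by apply: contraNneq x0 => Sx0; rewrite -[x]mul1mx -TS -mulmxA Sx0 mulmx0.
  + exact/KC.
  + by rewrite -mulmxA (mulmxA T) TS mul1mx -mulmxA; apply/KC.
  + rewrite trmx_mul trS -scalemxAr -!scalemxAl !mulmxA.
    by rewrite -(mulmxA _ T S) TS mulmx1 -(mulmxA _ T S) TS mulmx1 mxE qx mulr0.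
- case=> z [z0 Cz CAz qz]; exists (T *m z); split.
  + by apply: contraNneq z0 => Tz0; rewrite -[z]mul1mx -ST -mulmxA Tz0 mulmx0.
  + by apply/KC; rewrite mulmxA ST mul1mx.
  + by apply/KC; rewrite !mulmxA.
  + rewrite trmx_mul trT -scalemxAr -!scalemxAl !mulmxA mxE.
    by rewrite !mulmxA in qz; rewrite qz mulr0.
Qed.
End ConeEigenvalue.

(** * Pareto eigenvalues of 2x2 matrices *)

Section TwoByTwo.
Variable R : realType.

Definition mx2 (a b c d : R) : 'M[R]_2 := \matrix_(i, j)
  if i == 0 then (if j == 0 then a else b) else (if j == 0 then c else d).

Lemma ord2P (i : 'I_2) : i = 0 \/ i = 1.
Proof. by case: i => [[|[|//]]] Hi; [left|right]; apply/val_inj. Qed.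

Lemma mx2_eta (A : 'M[R]_2) : A = mx2 (A 0 0) (A 0 1) (A 1 0) (A 1 1).
Proof.
by apply/matrixP => i j; rewrite mxE; case: (ord2P i) => ->; case: (ord2P j) => ->.
Qed.

Lemma mulmx2E m k (A : 'M[R]_(m, 2)) (B : 'M[R]_(2, k)) i j :
  (A *m B) i j = A i 0 * B 0 j + A i 1 * B 1 j.
Proof.
rewrite mxE !big_ord_recl big_ord0 addr0.
by congr (A i _ * B _ j + A i _ * B _ j); apply: val_inj.
Qed.

Lemma mx2_lin (k a b c d a' b' c' d' : R) :
  k *: mx2 a b c d + mx2 a' b' c' d' =
  mx2 (k * a + a') (k * b + b') (k * c + c') (k * d + d').
Proof. by rewrite [LHS]mx2_eta !mxE. Qed.

Lemma mx2N (a b c d : R) : - mx2 a b c d = mx2 (- a) (- b) (- c) (- d).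
Proof. by rewrite [LHS]mx2_eta !mxE. Qed.

Lemma mul_mx2 (a b c d a' b' c' d' : R) :
  mx2 a b c d *m mx2 a' b' c' d' =
  mx2 (a * a' + b * c') (a * b' + b * d') (c * a' + d * c') (c * b' + d * d').
Proof. by rewrite [LHS]mx2_eta !mulmx2E !mxE. Qed.

Lemma tr_mx2 (a b c d : R) : (mx2 a b c d)^T = mx2 a c b d.
Proof. by rewrite [LHS]mx2_eta !mxE. Qed.

Lemma scalar_mx2 (l : R) : l%:M = mx2 l 0 0 l.
Proof. by rewrite [LHS]mx2_eta !mxE /= mulr1n mulr0n. Qed.

Lemma mx2_sub_scalar (a b c d l : R) : mx2 a b c d - l%:M = mx2 (a - l) b c (d - l).
Proof. by rewrite [LHS]mx2_eta !mxE /= mulr1n !mulr0n !subr0. Qed.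

Lemma quad2E (A : 'M[R]_2) (x : 'cV[R]_2) :
  (x^T *m A *m x) 0 0 = x 0 0 * (A *m x) 0 0 + x 1 0 * (A *m x) 1 0.
Proof. by rewrite -mulmxA mulmx2E !mxE. Qed.

Lemma col2_eq0 (z : 'cV[R]_2) : z 0 0 = 0 -> z 1 0 = 0 -> z = 0.
Proof.
by move=> z0 z1; apply/matrixP => i j; rewrite ord1 !mxE; case: (ord2P i) => ->.
Qed.

Definition orthant (z : 'cV[R]_2) : Prop := 0 <= z 0 0 /\ 0 <= z 1 0.

Definition pareto_eigenvalue : 'M[R]_2 -> R -> Prop := cone_eigenvalue orthant.

Lemma pareto_eigenvalue_mx2_lcp (a b c d l : R) :
  pareto_eigenvalue (mx2 a b c d) l <->
  exists u v, [/\ (u, v) != (0, 0), 0 <= u /\ 0 <= v,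
    0 <= (a - l) * u + b * v /\ 0 <= c * u + (d - l) * v &
    u * ((a - l) * u + b * v) + v * (c * u + (d - l) * v) = 0].
Proof.
rewrite /pareto_eigenvalue /cone_eigenvalue mx2_sub_scalar; split.
- case=> z [z0 zK]; rewrite quad2E /orthant !mulmx2E !mxE /= => yK q.
  exists (z 0 0), (z 1 0); split => //.
  by apply: contra_neq z0 => -[u0 v0]; apply: col2_eq0.
- case=> u [v [uv0 uK yK q]]; exists (\col_i (if i == 0 then u else v)).
  rewrite quad2E /orthant !mulmx2E !mxE /=; split => //.
  by apply: contra_neq uv0 => /matrixP z0; move: (z0 0 0) (z0 1 0); rewrite !mxE /= => -> ->.
Qed.

Lemma pareto_eigenvalue_mx2 (a b c d l : R) :
  pareto_eigenvalue (mx2 a b c d) l <->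
  [\/ 0 <= c /\ l = a, 0 <= b /\ l = d |
      exists2 w, 0 < w & a + b * w = l /\ c + d * w = l * w].
Proof.
rewrite pareto_eigenvalue_mx2_lcp; split.
- case=> u [v [uv0 [u_ge0 v_ge0]]]; set y0 := _ + _; set y1 := _ + _ => -[y0_ge0 y1_ge0] q.
  have [/eqP uy0 /eqP vy1] : u * y0 = 0 /\ v * y1 = 0 by split; nra.
  have [v0|v_neq0] := eqVneq v 0.
    have u_neq0 : u != 0 by apply: contra_neq uv0 => u0; rewrite u0 v0.
    move: uy0 y1_ge0; rewrite /y0 /y1 v0 !mulr0 !addr0 mulrCA !mulf_eq0 (negbTE u_neq0).
    rewrite !orbF subr_eq0 pmulr_lge0 ?lt_def ?u_neq0 // => /eqP-> c_ge0.
    by constructor 1.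
  have {}v_gt0 : 0 < v by rewrite lt_def v_neq0.
  move: vy1; rewrite mulf_eq0 (gt_eqF v_gt0) /= => /eqP y10.
  have [u0|u_neq0] := eqVneq u 0.
    move: y10 y0_ge0; rewrite /y0 /y1 u0 !mulr0 !add0r.
    move/eqP; rewrite mulf_eq0 (gt_eqF v_gt0) orbF subr_eq0 pmulr_lge0 // => /eqP-> b_ge0.
    by constructor 2.
  move: uy0; rewrite mulf_eq0 (negbTE u_neq0) /= => /eqP y00.
  have u_gt0 : 0 < u by rewrite lt_def u_neq0.
  constructor 3; exists (v / u); first exact: divr_gt0.
  move: y00 y10; rewrite /y0 /y1 => y00 y10.
  by split; apply: (mulIf u_neq0); rewrite mulrDl -!mulrA mulVf // !mulr1; lra.
case=> [[c_ge0 ->]|[b_ge0 ->]|[w w_gt0 [e0 e1]]].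
- by exists 1, 0; split; rewrite ?xpair_eqE ?oner_eq0 //; try split; lra.
- by exists 0, 1; split; rewrite ?xpair_eqE ?oner_eq0 ?andbF //; try split; lra.
- exists 1, w; split; rewrite ?xpair_eqE ?oner_eq0 //; try (split; lra).
  have -> : (a - l) * 1 + b * w = 0 by lra.
  have -> : c * 1 + (d - l) * w = 0 by lra.
  by rewrite !mulr0 addr0.
Qed.
End TwoByTwo.

Section RealAlgebra.
Variable R : realType.

Lemma bilinear_factorization (c b e c' b' e' : R) :
  (forall x s t, 0 < s -> 0 < t ->
     (x * c + s * b + t * e) * (x * c' + s * b' + t * e') = s * t /\
     0 < x * c + s * b + t * e) ->
  [/\ c = 0, c' = 0 &
    [/\ b' = 0, e = 0, b * e' = 1 & 0 < b] \/ [/\ b = 0, e' = 0, e * b' = 1 & 0 < e]].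
Proof.
move=> prod_st; have two_gt0 : (0 : R) < 2 by lra.
have [h11 pos] := prod_st 0 1 1 ltr01 ltr01.
have [h21 _] := prod_st 0 2 1 two_gt0 ltr01.
have [h12 _] := prod_st 0 1 2 ltr01 two_gt0.
have [hp _] := prod_st 1 1 1 ltr01 ltr01.
have [hm _] := prod_st (-1) 1 1 ltr01 ltr01.
have bb' : b * b' = 0 by nra.
have ee' : e * e' = 0 by nra.
have be : b * e' + e * b' = 1 by nra.
have cc' : c * c' = 0 by nra.
have cd : c * (b' + e') + c' * (b + e) = 0 by nra.
have sum : (b + e) * (b' + e') = 1 by nra.
have [c0 c'0] : c = 0 /\ c' = 0.
  by move/eqP: cc'; rewrite mulf_eq0 => /orP[] /eqP c0; rewrite c0 in cd *; split => //; nra.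
split => //; have [b0|b_neq0] := eqVneq b 0.
- have eb' : e * b' = 1 by rewrite b0 mul0r add0r in be.
  have e'0 : e' = 0 by rewrite -[e']mulr1 -eb' mulrA (mulrC e') ee' mul0r.
  by right; rewrite b0 in pos; do ?split => //; lra.
- have b'0 : b' = 0 by move/eqP: bb'; rewrite mulf_eq0 (negbTE b_neq0) => /eqP.
  have be' : b * e' = 1 by rewrite b'0 mulr0 addr0 in be.
  have e0 : e = 0 by rewrite -[e]mulr1 -be' mulrCA ee' mulr0.
  by left; rewrite e0 in pos; do ?split => //; lra.
Qed.

Lemma nonneg_shift_eq0 (u : R) : (forall t, 0 <= t <-> 0 <= u + t) -> u = 0.
Proof.
move=> shift; have := (shift 0).1 (lexx 0); have := (shift (- u)).2.
by rewrite subrr lexx => /(_ isT); rewrite addr0 oppr_ge0; lra.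
Qed.
End RealAlgebra.

Section ParetoSpectra.
Variable R : realType.
Implicit Types (a b c d l p s t v x : R) (B G : 'M[R]_2).

Lemma pareto_eigenvalue_eqdiag x s t l :
  pareto_eigenvalue (mx2 x s t x) l <->
  ((0 <= s \/ 0 <= t) /\ l = x) \/ [/\ l != x, (l - x) ^+ 2 = s * t & 0 < (l - x) * s].
Proof.
rewrite pareto_eigenvalue_mx2; split.
- case=> [[t_ge0 ->]|[s_ge0 ->]|[w w_gt0 [e0 e1]]].
  + by left; split; [right|].
  + by left; split; [left|].
  have [s0|s_neq0] := eqVneq s 0.
    by left; split; [left; rewrite s0|rewrite -e0 s0 mul0r addr0].
  have s2_gt0 : 0 < s ^+ 2 by rewrite exprn_even_gt0 ?s_neq0 ?orbT.
  have lx : l - x = s * w by rewrite -e0; ring.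
  have t_sw : t = s * w * w by rewrite -lx mulrBl -e1; ring.
  right; split; first (apply: contra_neq s_neq0 => lx0); nra.
- case=> [[[s_ge0|t_ge0] ->]|[lx_neq0 lx2 lxs]]; [by constructor 2|by constructor 1|].
  have s_neq0 : s != 0 by apply: contraTneq lxs => ->; rewrite mulr0 ltxx.
  constructor 3; exists ((l - x) / s).
    have s2_gt0 : 0 < s ^+ 2 by rewrite exprn_even_gt0 ?s_neq0 ?orbT.
    by rewrite -(pmulr_lgt0 _ s2_gt0) expr2 mulrA divfK.
  set w := (l - x) / s; have sw : s * w = l - x by rewrite mulrC divfK.
  split; first by rewrite sw addrC subrK.
  apply: (mulfI s_neq0); apply/eqP; rewrite -subr_eq0; apply/eqP.
  transitivity (s * t - (l - x) * (s * w)); first ring.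
  by rewrite sw -lx2; ring.
Qed.

Lemma pareto_eigenvalue_eqdiag_degenerate x s t l :
  s * t = 0 -> pareto_eigenvalue (mx2 x s t x) l -> l = x.
Proof.
move=> st0 /pareto_eigenvalue_eqdiag [[_ ->] // | [lx lx2 _]].
by move/eqP: lx2; rewrite st0 sqrf_eq0 subr_eq0 (negbTE lx).
Qed.

Lemma pareto_eigenvalue_diag p v l :
  pareto_eigenvalue (mx2 p 0 0 v) l <-> l = p \/ l = v.
Proof.
rewrite pareto_eigenvalue_mx2; split.
- by case=> [[_ ->]|[_ ->]|[w _ [<- _]]]; [left|right|left; rewrite mul0r addr0].
- by case=> ->; [constructor 1|constructor 2].
Qed.

Lemma pareto_eigenvalue_offdiag_neg a b d l :
  b < 0 -> pareto_eigenvalue (mx2 a b b d) l ->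
  [/\ l < a, l < d & (a - l) * (d - l) = b ^+ 2].
Proof.
move=> b_lt0 /pareto_eigenvalue_mx2 [[]|[]|[w w_gt0 [e0 e1]]]; try lra.
have bw_lt0 : b * w < 0 by rewrite pmulr_llt0.
have dl : (d - l) * w = - b by rewrite mulrBl -e1; ring.
split; first lra.
- by rewrite -subr_gt0 -(pmulr_lgt0 _ w_gt0) dl; lra.
- apply: (mulIf (lt0r_neq0 w_gt0)); rewrite -mulrA dl -e0; ring.
Qed.

Lemma pareto_perron a b d :
  0 < b -> exists l, [/\ pareto_eigenvalue (mx2 a b b d) l, a < l & d < l].
Proof.
move=> b_gt0; have b_neq0 : b != 0 by rewrite gt_eqF.
pose s := Num.sqrt ((a - d) ^+ 2 + 4 * b ^+ 2).
have s2 : s ^+ 2 = (a - d) ^+ 2 + 4 * b ^+ 2.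
  by rewrite sqr_sqrtr //; have := sqr_ge0 (a - d); have := sqr_ge0 b; nra.
have s_gt : a - d < s.
  have s_ge0 : 0 <= s := sqrtr_ge0 _.
  have bb_gt0 : 0 < b * b by rewrite mulr_gt0.
  rewrite ltNge; apply/negP => s_le; nra.
(* The positive root of b w^2 + (a - d) w = b, slope of the Perron eigenvector. *)
pose w := (s - (a - d)) / (2 * b).
have w_gt0 : 0 < w by rewrite divr_gt0 ?subr_gt0 ?mulr_gt0.
have w_root : b + d * w = (a + b * w) * w.
  apply: (mulfI b_neq0); apply/eqP; rewrite -subr_eq0; apply/eqP.
  transitivity ((4 * b ^+ 2 + (a - d) ^+ 2 - s ^+ 2) / 4); last by rewrite s2; ring.
  by rewrite /w; field.
exists (a + b * w); split.
- by apply/pareto_eigenvalue_mx2; constructor 3; exists w.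
- by rewrite ltrDl mulr_gt0.
- by rewrite -subr_lt0 -(pmulr_llt0 _ w_gt0) mulrBl -w_root; lra.
Qed.

Lemma pareto_spectrum_diag_entries G x :
  (forall l, pareto_eigenvalue G l -> l = x) ->
  (forall l, pareto_eigenvalue (- G) l -> l = - x) -> G 0 0 = x /\ G 1 1 = x.
Proof.
rewrite [G in pareto_eigenvalue (- G)]mx2_eta mx2N [G in pareto_eigenvalue G]mx2_eta.
move=> sG sNG; split.
- have [G10_ge0|G10_lt0] := leP 0 (G 1 0).
    by apply: sG; apply/pareto_eigenvalue_mx2; constructor 1.
  by apply: oppr_inj; apply: sNG; apply/pareto_eigenvalue_mx2; constructor 1; split; [lra|].
- have [G01_ge0|G01_lt0] := leP 0 (G 0 1).
    by apply: sG; apply/pareto_eigenvalue_mx2; constructor 2.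
  by apply: oppr_inj; apply: sNG; apply/pareto_eigenvalue_mx2; constructor 2; split; [lra|].
Qed.

Lemma pareto_eigenvalue_sym_spectrum1 x s :
  (forall l, pareto_eigenvalue (mx2 x s s x) l -> l = x) ->
  pareto_eigenvalue (mx2 x s s x) x -> s = 0.
Proof.
move=> sub1 xin; have [s_lt0|s_gt0|//] := ltgtP s 0.
- by have [] := pareto_eigenvalue_offdiag_neg s_lt0 xin; rewrite ltxx.
- suff: x + s = x by lra.
  apply: sub1; apply/pareto_eigenvalue_eqdiag; right.
  have -> : x + s - x = s by ring.
  by split; [apply/eqP; lra | rewrite expr2 | exact: mulr_gt0].
Qed.

Lemma pareto_eigenvalue_sym_spectrum01 a b d :
  (forall l, pareto_eigenvalue (mx2 a b b d) l <-> l = 0 \/ l = 1) ->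
  (b = 0 /\ (a = 1 /\ d = 0 \/ a = 0 /\ d = 1)) \/ [/\ a = 0, b = 1 & d = 0].
Proof.
move=> spec01; have in0 := (spec01 0).2 (or_introl erefl).
have in1 := (spec01 1).2 (or_intror erefl).
have [b_lt0|b_gt0|b0] := ltgtP b 0.
- have [? ? e0] := pareto_eigenvalue_offdiag_neg b_lt0 in0.
  have [? ? e1] := pareto_eigenvalue_offdiag_neg b_lt0 in1.
  (* (a - l) (d - l) = b^2 at l = 0 and at l = 1 forces a + d = 1 < a. *)
  by exfalso; nra.
- have /spec01 a01 : pareto_eigenvalue (mx2 a b b d) a.
    by apply/pareto_eigenvalue_mx2; constructor 1; split; [exact: ltW|].
  have /spec01 d01 : pareto_eigenvalue (mx2 a b b d) d.
    by apply/pareto_eigenvalue_mx2; constructor 2; split; [exact: ltW|].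
  have [l [/spec01 l01 al dl]] := pareto_perron a d b_gt0.
  have [a0 d0] : a = 0 /\ d = 0 by case: a01; case: d01; case: l01; lra.
  rewrite a0 d0 in in1; right; split => //.
  case/pareto_eigenvalue_eqdiag: in1 => [[_]|[_]]; rewrite ?subr0 ?expr1n; [lra|nra].
- rewrite b0 in in0 in1 spec01; left; split => //.
  move: in0 in1 (spec01 a) (spec01 d); rewrite !pareto_eigenvalue_diag.
  by move=> ? ? [+ _] [+ _]; lra.
Qed.

Lemma pareto_eigenvalue_1st0_at1 s t :
  pareto_eigenvalue (mx2 1 s t 0) 1 <-> 0 <= t.
Proof.
rewrite pareto_eigenvalue_mx2; split; last by move=> t_ge0; constructor 1.
case=> [[//]|[_ /eqP]|[w w_gt0 [_]]]; first by rewrite oner_eq0.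
by rewrite mul0r addr0 mul1r => ->; exact: ltW.
Qed.

Lemma pareto_eigenvalue_1m1t0 t l :
  1 / 4 < t -> pareto_eigenvalue (mx2 1 (-1) t 0) l -> l = 1.
Proof.
move=> t_gt /pareto_eigenvalue_mx2 [[_ //]|[? ?]|[w _ [e0 e1]]]; first lra.
by rewrite mul0r addr0 -e0 in e1; have := sqr_ge0 (w - 1 / 2); nra.
Qed.

Lemma pareto_eigenvalue_1sm10 s l :
  0 < s -> pareto_eigenvalue (mx2 1 s (-1) 0) l -> l = 0.
Proof.
move=> s_gt0 /pareto_eigenvalue_mx2 [[? ?]|[_ //]|[w w_gt0 [e0 e1]]]; first lra.
by rewrite mul0r addr0 -e0 in e1; nra.
Qed.

Lemma pareto_eigenvalue_0110 l : pareto_eigenvalue (mx2 0 1 1 0) l <-> l = 0 \/ l = 1.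
Proof.
rewrite pareto_eigenvalue_eqdiag subr0 mul1r expr2; split.
- by case=> [[_ ->]|[_ l2 l_gt0]]; [left|right; nra].
- by case=> ->; [left; split; [left|]|right; split; rewrite ?mulr1 ?oner_neq0 ?ltr01].
Qed.

Definition exchange B : 'M[R]_2 := mx2 (B 1 1) (B 1 0) (B 0 1) (B 0 0).

Lemma pareto_eigenvalue_exchange B l :
  pareto_eigenvalue (exchange B) l <-> pareto_eigenvalue B l.
Proof.
pose J : 'M[R]_2 := mx2 0 1 1 0.
have JJ : J *m J = 1%:M by rewrite mul_mx2 scalar_mx2; congr mx2; ring.
have -> : exchange B = J *m B *m J.
  by rewrite {2}(mx2_eta B) !mul_mx2; congr mx2; ring.
symmetry; apply: (cone_eigenvalue_conj (c := 1)) => //.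
- by rewrite tr_mx2 scale1r.
- exact: oner_neq0.
- by move=> z; rewrite /orthant !mulmx2E !mxE /= !mul0r !mul1r add0r addr0; tauto.
Qed.

Lemma exchange_mx2 a b c d : exchange (mx2 a b c d) = mx2 d c b a.
Proof. by rewrite /exchange !mxE. Qed.

Lemma pareto_eigenvalue_0st1_at1 s t :
  pareto_eigenvalue (mx2 0 s t 1) 1 <-> 0 <= s.
Proof. by rewrite -pareto_eigenvalue_exchange exchange_mx2 pareto_eigenvalue_1st0_at1. Qed.

(* Conjugation by diag(r, 1). *)
Definition scale_offdiag r B : 'M[R]_2 :=
  mx2 (B 0 0) (r * B 0 1) (r^-1 * B 1 0) (B 1 1).

Lemma scale_offdiagK r : r != 0 -> cancel (scale_offdiag r) (scale_offdiag r^-1).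
Proof.
move=> r_neq0 B; rewrite [RHS]mx2_eta /scale_offdiag !mxE /= invrK.
by rewrite mulKf // mulVKf.
Qed.

Lemma pareto_eigenvalue_scale_offdiag r B l :
  0 < r -> pareto_eigenvalue (scale_offdiag r B) l <-> pareto_eigenvalue B l.
Proof.
suff scaleP r' B' : 0 < r' ->
    pareto_eigenvalue B' l -> pareto_eigenvalue (scale_offdiag r' B') l.
  move=> r_gt0; split; last exact: scaleP.
  have rV_gt0 : 0 < r^-1 by rewrite invr_gt0.
  by move/(scaleP _ _ rV_gt0); rewrite scale_offdiagK // gt_eqF.
move=> r_gt0; have r_neq0 : r' != 0 by rewrite gt_eqF.
rewrite {1}(mx2_eta B') /scale_offdiag !pareto_eigenvalue_mx2.
case=> [[c_ge0 ->]|[b_ge0 ->]|[w w_gt0 [e0 e1]]].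
- by constructor 1; split => //; rewrite mulr_ge0 // invr_ge0 ltW.
- by constructor 2; split => //; rewrite mulr_ge0 // ltW.
- constructor 3; exists (r'^-1 * w); first by rewrite mulr_gt0 ?invr_gt0.
  by split; [rewrite -e0 | rewrite [RHS]mulrCA -e1]; field.
Qed.
End ParetoSpectra.

Arguments exchange {R}.

(** * Linear preservers of the Pareto spectrum *)

Section ParetoPreservers.
Variable R : realType.
Implicit Types (a b c d r s t x : R) (B : 'M[R]_2) (f psi : 'M[R]_2 -> 'M[R]_2).

Definition pareto_preserving psi :=
  forall B l, pareto_eigenvalue (psi B) l <-> pareto_eigenvalue B l.

Lemma linear_fun0 f : linear f -> f 0 = 0.
Proof.
move=> f_lin; have := f_lin 1 0 0; rewrite !scale1r addr0 => f00.
by apply: (addrI (f 0)); rewrite addr0 -f00.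
Qed.

Lemma linear_funN f B : linear f -> f (- B) = - f B.
Proof.
move=> f_lin; have := f_lin (-1) B 0.
by rewrite !scaleN1r addr0 linear_fun0 // addr0.
Qed.

Lemma linear_mx2E f a b c d : linear f ->
  f (mx2 a b c d) = a *: f (mx2 1 0 0 0) + (b *: f (mx2 0 1 0 0) +
                      (c *: f (mx2 0 0 1 0) + d *: f (mx2 0 0 0 1))).
Proof.
move=> f_lin; rewrite -[d *: _]addr0 -(linear_fun0 f_lin) -!f_lin; congr f.
by rewrite [RHS]mx2_eta !mxE /=; congr mx2; ring.
Qed.

Section BasisImages.
Variable psi : 'M[R]_2 -> 'M[R]_2.
Hypotheses (psi_lin : linear psi) (psi_pres : pareto_preserving psi).

Lemma pareto_preserver_eqdiag_diag x s t : s * t = 0 ->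
  psi (mx2 x s t x) 0 0 = x /\ psi (mx2 x s t x) 1 1 = x.
Proof.
move=> st0; apply: pareto_spectrum_diag_entries => l.
- by move/psi_pres; apply: pareto_eigenvalue_eqdiag_degenerate.
- rewrite -linear_funN // mx2N => /psi_pres.
  by apply: pareto_eigenvalue_eqdiag_degenerate; rewrite mulrNN.
Qed.

Lemma pareto_preserver_eqdiagE x s t : psi (mx2 x s t x) =
  x *: psi (mx2 1 0 0 1) + (s *: psi (mx2 0 1 0 0) + t *: psi (mx2 0 0 1 0)).
Proof.
rewrite -[t *: _]addr0 -(linear_fun0 psi_lin) -!psi_lin; congr psi.
by rewrite [RHS]mx2_eta !mxE /=; congr mx2; ring.
Qed.

Lemma pareto_preserver_offdiag x s t : 0 < s -> 0 < t ->
  psi (mx2 x s t x) 0 1 * psi (mx2 x s t x) 1 0 = s * t /\ 0 < psi (mx2 x s t x) 0 1.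
Proof.
move=> s_gt0 t_gt0; set M := psi _.
have [I00 I11] := pareto_preserver_eqdiag_diag 1 (mulr0 0).
have [E00 E11] := pareto_preserver_eqdiag_diag 0 (mulr0 1).
have [F00 F11] := pareto_preserver_eqdiag_diag 0 (mul0r 1).
have Meta : M = mx2 x (M 0 1) (M 1 0) x.
  rewrite [LHS]mx2_eta /M pareto_preserver_eqdiagE !mxE I00 I11 E00 E11 F00 F11.
  by congr mx2; ring.
pose q := Num.sqrt (s * t); have st_gt0 : 0 < s * t by rewrite mulr_gt0.
have q_gt0 : 0 < q by rewrite sqrtr_gt0.
have q2 : q ^+ 2 = s * t by rewrite sqr_sqrtr // ltW.
have /psi_pres : pareto_eigenvalue (mx2 x s t x) (x + q).
  apply/pareto_eigenvalue_eqdiag; right; rewrite addrAC subrr add0r.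
  by split; [apply/eqP; lra | | rewrite mulr_gt0].
rewrite -/M {1}Meta => /pareto_eigenvalue_eqdiag [[_ /eqP]|[_]]; first by lra.
by rewrite addrAC subrr add0r q2 pmulr_rgt0.
Qed.

Lemma pareto_preserver_basis :
  psi (mx2 1 0 0 1) = mx2 1 0 0 1 /\ exists2 r, 0 < r &
  (psi (mx2 0 1 0 0) = mx2 0 r 0 0 /\ psi (mx2 0 0 1 0) = mx2 0 0 r^-1 0) \/
  (psi (mx2 0 1 0 0) = mx2 0 0 r^-1 0 /\ psi (mx2 0 0 1 0) = mx2 0 r 0 0).
Proof.
have [I00 I11] := pareto_preserver_eqdiag_diag 1 (mulr0 0).
have [E00 E11] := pareto_preserver_eqdiag_diag 0 (mulr0 1).
have [F00 F11] := pareto_preserver_eqdiag_diag 0 (mul0r 1).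
set I' := psi (mx2 1 0 0 1) in I00 I11 *; set E := psi (mx2 0 1 0 0) in E00 E11 *.
set F := psi (mx2 0 0 1 0) in F00 F11 *.
have offdiag x s t : 0 < s -> 0 < t ->
    (x * I' 0 1 + s * E 0 1 + t * F 0 1) * (x * I' 1 0 + s * E 1 0 + t * F 1 0) = s * t
    /\ 0 < x * I' 0 1 + s * E 0 1 + t * F 0 1.
  move=> s_gt0 t_gt0; have := pareto_preserver_offdiag x s_gt0 t_gt0.
  by rewrite pareto_preserver_eqdiagE -/I' -/E -/F !mxE !addrA.
have Ieta := mx2_eta I'; have Eeta := mx2_eta E; have Feta := mx2_eta F.
rewrite I00 I11 in Ieta; rewrite E00 E11 in Eeta; rewrite F00 F11 in Feta.
have [I01 I10 [[E10 F01 EF r_gt0]|[E01 F10 FE r_gt0]]] := bilinear_factorization offdiag.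
- have F10 : F 1 0 = (E 0 1)^-1 by rewrite -[RHS]mulr1 -EF mulKf // gt_eqF.
  split; first by rewrite Ieta I01 I10.
  by exists (E 0 1) => //; left; split; [rewrite {1}Eeta E10 | rewrite {1}Feta F01 F10].
- have E10 : E 1 0 = (F 0 1)^-1 by rewrite -[RHS]mulr1 -FE mulKf // gt_eqF.
  split; first by rewrite Ieta I01 I10.
  by exists (F 0 1) => //; right; split; [rewrite {1}Eeta E01 E10 | rewrite {1}Feta F10].
Qed.
End BasisImages.

Section FixingPreserver.
Variable psi : 'M[R]_2 -> 'M[R]_2.
Hypotheses (psi_lin : linear psi) (psi_pres : pareto_preserving psi).
Hypotheses (fixI : psi (mx2 1 0 0 1) = mx2 1 0 0 1)
  (fixE : psi (mx2 0 1 0 0) = mx2 0 1 0 0) (fixF : psi (mx2 0 0 1 0) = mx2 0 0 1 0).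

Lemma fixing_preserverE a b c d : let X := psi (mx2 1 0 0 0) in
  psi (mx2 a b c d) = mx2 (a * X 0 0 + d * (1 - X 0 0)) (a * X 0 1 + b - d * X 0 1)
                          (a * X 1 0 + c - d * X 1 0) (a * X 1 1 + d * (1 - X 1 1)).
Proof.
move=> X; have psiE22 : psi (mx2 0 0 0 1) = (-1) *: X + mx2 1 0 0 1.
  by rewrite /X -fixI -psi_lin mx2_lin !mulr0 !addr0 add0r mulr1 addNr.
rewrite linear_mx2E // fixE fixF psiE22 -/X [LHS]mx2_eta !mxE /=.
by congr mx2; ring.
Qed.

Lemma fixing_preserverE11 : psi (mx2 1 0 0 0) = mx2 1 0 0 0.
Proof.
set X := psi (mx2 1 0 0 0); have psiE := fixing_preserverE; rewrite -/X in psiE.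
(* For t > 1/4 the only Pareto eigenvalue of [mx2 1 (-1) t 0] is 1, while X 0 0
   is a Pareto eigenvalue of its image once X 1 0 + t >= 0; similarly for X 1 1. *)
have X00 : X 0 0 = 1.
  pose t := X 1 0 ^+ 2 + 1.
  apply: (@pareto_eigenvalue_1m1t0 _ t); first by rewrite /t; have := sqr_ge0 (X 1 0); lra.
  apply/psi_pres; rewrite psiE; apply/pareto_eigenvalue_mx2; constructor 1.
  by split; [rewrite /t; have := sqr_ge0 (X 1 0 + 1 / 2); nra | ring].
have X11 : X 1 1 = 0.
  pose s := X 0 1 ^+ 2 + 1.
  apply: (@pareto_eigenvalue_1sm10 _ s); first by rewrite /s; have := sqr_ge0 (X 0 1); lra.
  apply/psi_pres; rewrite psiE; apply/pareto_eigenvalue_mx2; constructor 2.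
  by split; [rewrite /s; have := sqr_ge0 (X 0 1 + 1 / 2); nra | ring].
have X10 : X 1 0 = 0.
  apply: nonneg_shift_eq0 => t; rewrite -(pareto_eigenvalue_1st0_at1 (- X 0 1)) -psi_pres psiE.
  set M := mx2 _ _ _ _; have -> : M = mx2 1 0 (X 1 0 + t) 0.
    by congr mx2; rewrite ?X00 ?X11; ring.
  exact: pareto_eigenvalue_1st0_at1.
have X01 : X 0 1 = 0.
  apply: oppr_inj; rewrite oppr0; apply: nonneg_shift_eq0 => s.
  rewrite -(pareto_eigenvalue_0st1_at1 s 0) -psi_pres psiE.
  set M := mx2 _ _ _ _; have -> : M = mx2 0 (- X 0 1 + s) 0 1.
    by congr mx2; rewrite ?X00 ?X10 ?X11; ring.
  exact: pareto_eigenvalue_0st1_at1.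
by rewrite [X]mx2_eta X00 X01 X10 X11.
Qed.

Lemma fixing_preserver_id : psi =1 id.
Proof.
move=> B; rewrite [in RHS](mx2_eta B) {1}(mx2_eta B) fixing_preserverE fixing_preserverE11.
by rewrite !mxE /=; congr mx2; ring.
Qed.
End FixingPreserver.

Lemma scale_offdiag_linear r : linear (scale_offdiag r).
Proof. by move=> k A B; rewrite /scale_offdiag mx2_lin !mxE; congr mx2; ring. Qed.

Lemma exchange_linear : linear (@exchange R).
Proof. by move=> k A B; rewrite /exchange mx2_lin !mxE. Qed.

Lemma exchangeK : involutive (@exchange R).
Proof. by move=> B; rewrite {2}/exchange exchange_mx2 -mx2_eta. Qed.

Lemma pareto_preserver_scale_offdiag psi r : linear psi -> pareto_preserving psi -> 0 < r ->
  psi (mx2 1 0 0 1) = mx2 1 0 0 1 -> psi (mx2 0 1 0 0) = mx2 0 r 0 0 ->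
  psi (mx2 0 0 1 0) = mx2 0 0 r^-1 0 -> psi =1 scale_offdiag r.
Proof.
move=> psi_lin psi_pres r_gt0 fixI psiE psiF B; have r_neq0 : r != 0 by rewrite gt_eqF.
rewrite -[psi B](scale_offdiagK (invr_neq0 r_neq0)) invrK; congr scale_offdiag.
apply: (@fixing_preserver_id (scale_offdiag r^-1 \o psi)).
- by move=> k A A'; rewrite /= psi_lin scale_offdiag_linear.
- by move=> A l; rewrite /= pareto_eigenvalue_scale_offdiag ?invr_gt0.
- by rewrite /= fixI /scale_offdiag !mxE /= !mulr0.
- by rewrite /= psiE /scale_offdiag !mxE /= mulVf // mulr0.
- by rewrite /= psiF /scale_offdiag !mxE /= invrK mulfV // mulr0.
Qed.

Theorem pareto_preserverP psi : linear psi -> pareto_preserving psi ->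
  exists2 r, 0 < r & psi =1 scale_offdiag r \/ psi =1 exchange \o scale_offdiag r.
Proof.
move=> psi_lin psi_pres.
have [fixI [r r_gt0 [[psiE psiF]|[psiE psiF]]]] := pareto_preserver_basis psi_lin psi_pres.
  by exists r => //; left; apply: pareto_preserver_scale_offdiag.
exists r^-1; first by rewrite invr_gt0.
right => B; rewrite -[psi B]exchangeK /=; congr exchange.
apply: (@pareto_preserver_scale_offdiag (exchange \o psi)) => /=.
- by move=> k A A' /=; rewrite psi_lin exchange_linear.
- by move=> A l /=; rewrite pareto_eigenvalue_exchange.
- by rewrite invr_gt0.
- by rewrite fixI exchange_mx2.
- by rewrite psiE exchange_mx2.
- by rewrite psiF exchange_mx2 invrK.
Qed.

End ParetoPreservers.

Section SymParetoPreservers.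
Variable R : realType.
Implicit Types (a b c d l : R) (A : 'M[R]_2).

Lemma sym2E A : sym2 A <-> A 0 1 = A 1 0.
Proof.
split=> [/(congr1 (fun M : 'M_2 => M 1 0))|A01]; first by rewrite mxE.
by rewrite /sym2 [LHS]mx2_eta [RHS]mx2_eta !mxE A01.
Qed.

Lemma sym2_eta A : sym2 A -> A = mx2 (A 0 0) (A 0 1) (A 0 1) (A 1 1).
Proof.
move=> sA; rewrite {1}(mx2_eta A); congr mx2.
by move/(congr1 (fun M : 'M_2 => M 0 1)): sA; rewrite mxE.
Qed.

Section Preserver.
Variable psi : 'M[R]_2 -> 'M[R]_2.
Hypotheses (psi_sym : forall A, sym2 A -> sym2 (psi A))
  (psi_lin : forall c A B, sym2 A -> sym2 B -> psi (c *: A + B) = c *: psi A + psi B)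
  (psi_pres : forall A, sym2 A -> forall l,
     pareto_eigenvalue (psi A) l <-> pareto_eigenvalue A l).

Let sym0 : sym2 (0 : 'M[R]_2). Proof. by rewrite /sym2 trmx0. Qed.

Lemma sym_preserver0 : psi 0 = 0.
Proof.
have := psi_lin 1 sym0 sym0; rewrite !scale1r addr0 => psi00.
by apply: (addrI (psi 0)); rewrite addr0 -psi00.
Qed.

Lemma sym_preserverN A : sym2 A -> psi (- A) = - psi A.
Proof.
by move=> sA; have := psi_lin (-1) sA sym0; rewrite !scaleN1r !addr0 sym_preserver0 addr0.
Qed.

Lemma sym_preserver_mx2E a b d : psi (mx2 a b b d) =
  a *: psi (mx2 1 0 0 0) + (b *: psi (mx2 0 1 1 0) + d *: psi (mx2 0 0 0 1)).
Proof.
have -> : mx2 a b b d = a *: mx2 1 0 0 0 + (b *: mx2 0 1 1 0 + (d *: mx2 0 0 0 1 + 0)).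
  by rewrite [RHS]mx2_eta !mxE /=; congr mx2; ring.
by rewrite !psi_lin ?sym_preserver0 ?addr0 // sym2E !mxE /=; ring.
Qed.

Lemma sym_preserver_I : psi (mx2 1 0 0 1) = mx2 1 0 0 1.
Proof.
have sI : sym2 (mx2 1 0 0 1 : 'M[R]_2) by apply/sym2E; rewrite !mxE.
have sNI : sym2 (- mx2 1 0 0 1 : 'M[R]_2) by apply/sym2E; rewrite !mxE.
set M := psi (mx2 1 0 0 1).
have specM l : pareto_eigenvalue M l -> l = 1.
  by move/(psi_pres sI)/pareto_eigenvalue_diag => [].
have [M00 M11] : M 0 0 = 1 /\ M 1 1 = 1.
  apply: pareto_spectrum_diag_entries => // l.
  rewrite -sym_preserverN // => /(psi_pres sNI).
  by rewrite mx2N oppr0 => /pareto_eigenvalue_diag [].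
have sM := sym2_eta (psi_sym sI); rewrite -/M M00 M11 in sM.
suff M01 : M 0 1 = 0 by rewrite sM M01.
apply: (@pareto_eigenvalue_sym_spectrum1 _ 1 (M 0 1)); rewrite -sM //.
by apply/(psi_pres sI)/pareto_eigenvalue_diag; left.
Qed.

Lemma sym_preserver_J : psi (mx2 0 1 1 0) = mx2 0 1 1 0.
Proof.
have sJ : sym2 (mx2 0 1 1 0 : 'M[R]_2) by apply/sym2E; rewrite !mxE.
have sNJ : sym2 (- mx2 0 1 1 0 : 'M[R]_2) by apply/sym2E; rewrite !mxE.
set M := psi (mx2 0 1 1 0); have sM := sym2_eta (psi_sym sJ); rewrite -/M in sM.
have specM l : pareto_eigenvalue (mx2 (M 0 0) (M 0 1) (M 0 1) (M 1 1)) l <-> l = 0 \/ l = 1.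
  by rewrite -sM (psi_pres sJ) pareto_eigenvalue_0110.
case: (pareto_eigenvalue_sym_spectrum01 specM) => [[M01 Mdiag]|[M00 M01 M11]].
  have : pareto_eigenvalue (- M) 0.
    rewrite sM mx2N M01 oppr0; apply/pareto_eigenvalue_diag.
    by case: Mdiag => [[_ ->]|[-> _]]; rewrite oppr0; [right|left].
  rewrite /M -sym_preserverN // (psi_pres sNJ) mx2N !oppr0.
  by case/pareto_eigenvalue_offdiag_neg; rewrite ?ltxx // ltrN10.
by rewrite sM M00 M01 M11.
Qed.

Lemma sym_preserverE22 : psi (mx2 0 0 0 1) = mx2 1 0 0 1 - psi (mx2 1 0 0 0).
Proof.
have sE11 : sym2 (mx2 1 0 0 0 : 'M[R]_2) by apply/sym2E; rewrite !mxE.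
have sI : sym2 (mx2 1 0 0 1 : 'M[R]_2) by apply/sym2E; rewrite !mxE.
rewrite -{1}sym_preserver_I addrC -scaleN1r -psi_lin // mx2_lin.
by congr psi; congr mx2; ring.
Qed.

Lemma sym_preserver_E11 :
  psi (mx2 1 0 0 0) = mx2 1 0 0 0 \/ psi (mx2 1 0 0 0) = mx2 0 0 0 1.
Proof.
have sE11 : sym2 (mx2 1 0 0 0 : 'M[R]_2) by apply/sym2E; rewrite !mxE.
have sE22 : sym2 (mx2 0 0 0 1 : 'M[R]_2) by apply/sym2E; rewrite !mxE.
set M := psi (mx2 1 0 0 0); have sM := sym2_eta (psi_sym sE11); rewrite -/M in sM.
have specM l : pareto_eigenvalue (mx2 (M 0 0) (M 0 1) (M 0 1) (M 1 1)) l <-> l = 0 \/ l = 1.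
  by rewrite -sM (psi_pres sE11) pareto_eigenvalue_diag or_comm.
case: (pareto_eigenvalue_sym_spectrum01 specM) => [[M01 [[M00 M11]|[M00 M11]]]|[M00 M01 M11]].
- by left; rewrite sM M00 M01 M11.
- by right; rewrite sM M00 M01 M11.
have specE22 l : pareto_eigenvalue (mx2 1 (-1) (-1) 1) l <-> l = 0 \/ l = 1.
  rewrite -(pareto_eigenvalue_diag 0 1 l) -(psi_pres sE22) sym_preserverE22 -/M sM M00 M01 M11.
  by rewrite [_ - _]mx2_eta !mxE /= !subr0 !sub0r.
have := @ltrN10 R.
by case: (pareto_eigenvalue_sym_spectrum01 specE22) => [[->]|[_ ->]]; rewrite ?ltxx ?ltr10.
Qed.

Theorem sym_pareto_preserverP :
  (forall A, sym2 A -> psi A = A) \/ (forall A, sym2 A -> psi A = exchange A).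
Proof.
by case: sym_preserver_E11 => psiE11; [left|right] => A /sym2_eta->;
  rewrite sym_preserver_mx2E sym_preserverE22 psiE11 sym_preserver_J
    ?exchange_mx2 [LHS]mx2_eta !mxE /=; congr mx2; ring.
Qed.
End Preserver.
End SymParetoPreservers.

(** * Light-cone coordinates *)

Section LightCone.
Variable R : realType.
Implicit Types (a b l r : R) (A B : 'M[R]_2).

(* The columns (1, 1) and (-1, 1) span the two boundary rays of the Lorentz cone. *)
Definition lc_basis : 'M[R]_2 := mx2 1 (-1) 1 1.
Definition lc_coord : 'M[R]_2 := mx2 2^-1 2^-1 (- 2^-1) 2^-1.

Lemma lc_coord_basis : lc_coord *m lc_basis = 1%:M.
Proof. by rewrite mul_mx2 scalar_mx2; congr mx2; field. Qed.

Lemma lc_basis_coord : lc_basis *m lc_coord = 1%:M.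
Proof. by rewrite mul_mx2 scalar_mx2; congr mx2; field. Qed.

Lemma tr_lc_basis : lc_basis^T = 2 *: lc_coord.
Proof. by rewrite tr_mx2 [RHS]mx2_eta !mxE /=; congr mx2; field. Qed.

Lemma lorentz_cone_lc (x : 'cV[R]_2) : lorentz_cone x <-> orthant (lc_coord *m x).
Proof.
rewrite /lorentz_cone /orthant !mulmx2E !mxE /= ler_norml.
split=> [/andP[? ?]|[? ?]]; first by split; lra.
by apply/andP; split; lra.
Qed.

Definition lc A := lc_coord *m A *m lc_basis.
Definition lc_inv B := lc_basis *m B *m lc_coord.

Lemma lcK : cancel lc lc_inv.
Proof.
move=> A; rewrite /lc /lc_inv !mulmxA lc_basis_coord mul1mx.
by rewrite -mulmxA lc_basis_coord mulmx1.
Qed.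

Lemma lc_invK : cancel lc_inv lc.
Proof.
move=> B; rewrite /lc /lc_inv !mulmxA lc_coord_basis mul1mx.
by rewrite -mulmxA lc_coord_basis mulmx1.
Qed.

Lemma lc_mul A B : lc (A *m B) = lc A *m lc B.
Proof. by rewrite /lc !mulmxA -(mulmxA _ lc_basis) lc_basis_coord mulmx1. Qed.

Lemma lc_linear : linear lc.
Proof. by move=> k A B; rewrite /lc mulmxDr mulmxDl -scalemxAr -scalemxAl. Qed.

Lemma lc_inv_linear : linear lc_inv.
Proof. by move=> k A B; rewrite /lc_inv mulmxDr mulmxDl -scalemxAr -scalemxAl. Qed.

Lemma L_eigenvalue_lc A l : L_eigenvalue A l <-> pareto_eigenvalue (lc A) l.
Proof.
(* [L_eigenvalue] is [cone_eigenvalue lorentz_cone] by conversion. *)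
apply: (cone_eigenvalue_conj lc_coord_basis lc_basis_coord tr_lc_basis).
  by rewrite pnatr_eq0.
exact: lorentz_cone_lc.
Qed.

Lemma tr_lc A : (lc A)^T = lc A^T.
Proof.
have tr_coord : lc_coord^T = 2^-1 *: lc_basis.
  by rewrite tr_mx2 [RHS]mx2_eta !mxE /=; congr mx2; field.
rewrite /lc !trmx_mul tr_lc_basis tr_coord -scalemxAl -!scalemxAr scalerA.
by rewrite mulfV ?pnatr_eq0 // scale1r mulmxA.
Qed.

Lemma sym2_lc A : sym2 (lc A) <-> sym2 A.
Proof. by rewrite /sym2 tr_lc; split=> [/(can_inj lcK)|->]. Qed.

Lemma mulmx1_invmx n (M N : 'M[R]_n.+1) : M *m N = 1%:M -> invmx M = N.
Proof.
move=> MN; have [uM _] := mulmx1_unit MN.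
by rewrite -[invmx M]mulmx1 -MN mulmxA mulVmx // mul1mx.
Qed.

Lemma hyperbolic_sum_neq0 a b : a ^+ 2 - b ^+ 2 = 1 -> a + b != 0.
Proof.
move=> hab; apply/eqP => ab0; move: hab.
by rewrite subr_sqr ab0 mulr0 => /eqP; rewrite eq_sym oner_eq0.
Qed.

Lemma hyperbolic_param r : 0 < r -> exists a b, a ^+ 2 - b ^+ 2 = 1 /\ (a + b) ^+ 2 = r.
Proof.
move=> r_gt0; pose k := Num.sqrt r; have k_gt0 : 0 < k by rewrite sqrtr_gt0.
exists ((k + k^-1) / 2), ((k - k^-1) / 2); split.
  by rewrite subr_sqr; field; rewrite gt_eqF.
by rewrite -(sqr_sqrtr (ltW r_gt0)) -/k; congr (_ ^+ 2); field; rewrite gt_eqF.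
Qed.

Lemma Pmx_mx2 a b : Pmx a b = mx2 a b b a.
Proof. by rewrite [LHS]mx2_eta !mxE. Qed.

Lemma Qmx_mx2 a b : Qmx a b = mx2 (- a) (- b) b a.
Proof. by rewrite [LHS]mx2_eta !mxE. Qed.

Lemma invmx_Pmx a b : a ^+ 2 - b ^+ 2 = 1 -> invmx (Pmx a b) = Pmx a (- b).
Proof.
move=> hab; apply: mulmx1_invmx; rewrite !Pmx_mx2 mul_mx2 scalar_mx2 -hab.
by congr mx2; ring.
Qed.

Lemma invmx_Qmx a b : a ^+ 2 - b ^+ 2 = 1 -> invmx (Qmx a b) = Qmx a b.
Proof.
move=> hab; apply: mulmx1_invmx; rewrite !Qmx_mx2 mul_mx2 scalar_mx2 -hab.
by congr mx2; ring.
Qed.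

Lemma lc_Pmx a b : lc (Pmx a b) = mx2 (a + b) 0 0 (a - b).
Proof. by rewrite Pmx_mx2 /lc !mul_mx2; congr mx2; field. Qed.

Lemma lc_Qmx a b : lc (Qmx a b) = mx2 0 (a - b) (a + b) 0.
Proof. by rewrite Qmx_mx2 /lc !mul_mx2; congr mx2; field. Qed.

Lemma lc_conjP a b A : a ^+ 2 - b ^+ 2 = 1 ->
  lc (Pmx a b *m A *m invmx (Pmx a b)) = scale_offdiag ((a + b) ^+ 2) (lc A).
Proof.
move=> hab; have ab_neq0 := hyperbolic_sum_neq0 hab.
have a_b : a - b = (a + b)^-1.
  by apply: (mulfI ab_neq0); rewrite mulfV // mulrC -subr_sqr.
rewrite invmx_Pmx // !lc_mul !lc_Pmx opprK {1}(mx2_eta (lc A)) !mul_mx2 a_b.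
by rewrite /scale_offdiag; congr mx2; field.
Qed.

Lemma lc_conjQ a b A : a ^+ 2 - b ^+ 2 = 1 ->
  lc (Qmx a b *m A *m invmx (Qmx a b)) = exchange (scale_offdiag ((a + b) ^+ 2) (lc A)).
Proof.
move=> hab; have ab_neq0 := hyperbolic_sum_neq0 hab.
have a_b : a - b = (a + b)^-1.
  by apply: (mulfI ab_neq0); rewrite mulfV // mulrC -subr_sqr.
rewrite invmx_Qmx // !lc_mul !lc_Qmx {1}(mx2_eta (lc A)) !mul_mx2 a_b.
by rewrite /scale_offdiag exchange_mx2; congr mx2; field.
Qed.

Lemma L_eigenvalue_conjP a b A l : a ^+ 2 - b ^+ 2 = 1 ->
  L_eigenvalue (Pmx a b *m A *m invmx (Pmx a b)) l <-> L_eigenvalue A l.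
Proof.
move=> hab; rewrite !L_eigenvalue_lc lc_conjP // pareto_eigenvalue_scale_offdiag //.
by rewrite exprn_even_gt0 // hyperbolic_sum_neq0.
Qed.

Lemma L_eigenvalue_conjQ a b A l : a ^+ 2 - b ^+ 2 = 1 ->
  L_eigenvalue (Qmx a b *m A *m invmx (Qmx a b)) l <-> L_eigenvalue A l.
Proof.
move=> hab; rewrite !L_eigenvalue_lc lc_conjQ // pareto_eigenvalue_exchange.
by rewrite pareto_eigenvalue_scale_offdiag // exprn_even_gt0 // hyperbolic_sum_neq0.
Qed.
End LightCone.

Arguments lc {R}.
Arguments lc_inv {R}.

Section LorentzPreservers.
Variable R : realType.
Implicit Types (phi : 'M[R]_2 -> 'M[R]_2) (A B : 'M[R]_2).

Theorem lorentz_preserverP phi : linear phi ->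
  (forall A, same_L_spectrum (phi A) A) <->
  exists a b : R, a ^+ 2 - b ^+ 2 = 1 /\
    ((forall A, phi A = Pmx a b *m A *m invmx (Pmx a b)) \/
     (forall A, phi A = Qmx a b *m A *m invmx (Qmx a b))).
Proof.
move=> phi_lin; split=> [phi_pres|[a [b [hab [phiP|phiQ]]]] A l]; last first.
- by rewrite /L_spectrum phiQ L_eigenvalue_conjQ.
- by rewrite /L_spectrum phiP L_eigenvalue_conjP.
pose psi := lc \o phi \o lc_inv.
have psi_lin : linear psi.
  by move=> k A B; rewrite /psi /= lc_inv_linear phi_lin lc_linear.
have psi_pres : pareto_preserving psi.
  move=> B l; rewrite /psi /= -L_eigenvalue_lc.
  by apply: iff_trans (phi_pres _ l) _; rewrite /L_spectrum L_eigenvalue_lc lc_invK.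
have lc_phi A : lc (phi A) = psi (lc A) by rewrite /psi /= lcK.
have [r r_gt0 psiE] := pareto_preserverP psi_lin psi_pres.
have [a [b [hab abr]]] := hyperbolic_param r_gt0.
exists a, b; split => //; case: psiE => psiE; [left|right] => A; apply: (can_inj (@lcK R)).
- by rewrite lc_phi psiE lc_conjP // abr.
- by rewrite lc_phi psiE lc_conjQ // abr.
Qed.

Theorem sym_lorentz_preserverP phi :
  (forall A, sym2 A -> sym2 (phi A)) ->
  (forall c A B, sym2 A -> sym2 B -> phi (c *: A + B) = c *: phi A + phi B) ->
  (forall A, sym2 A -> same_L_spectrum (phi A) A) <->
  exists a b : R, [/\ a ^+ 2 - b ^+ 2 = 1, b = 0 &
    (forall A, sym2 A -> phi A = Pmx a b *m A *m invmx (Pmx a b)) \/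
    (forall A, sym2 A -> phi A = Qmx a b *m A *m invmx (Qmx a b))].
Proof.
move=> phi_sym phi_lin; split=> [phi_pres|[a [b [hab _ [phiP|phiQ]]]] A sA l]; last first.
- by rewrite /L_spectrum phiQ // L_eigenvalue_conjQ.
- by rewrite /L_spectrum phiP // L_eigenvalue_conjP.
have sym2_lc_inv B : sym2 (lc_inv B) <-> sym2 B by rewrite -sym2_lc lc_invK.
pose psi := lc \o phi \o lc_inv.
have lc_phi A : lc (phi A) = psi (lc A) by rewrite /psi /= lcK.
have hyp10 : (1 : R) ^+ 2 - 0 ^+ 2 = 1 by rewrite expr1n expr2 mulr0 subr0.
have scale1 B : scale_offdiag ((1 + 0) ^+ 2) B = B.
  by rewrite addr0 expr1n /scale_offdiag invr1 !mul1r -mx2_eta.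
have psi_sym B : sym2 B -> sym2 (psi B).
  by move=> /sym2_lc_inv /phi_sym; rewrite /psi /= sym2_lc.
have psi_lin c A B : sym2 A -> sym2 B -> psi (c *: A + B) = c *: psi A + psi B.
  by move=> /sym2_lc_inv sA /sym2_lc_inv sB; rewrite /psi /= lc_inv_linear phi_lin ?lc_linear.
have psi_pres B : sym2 B -> forall l,
    pareto_eigenvalue (psi B) l <-> pareto_eigenvalue B l.
  move=> /sym2_lc_inv sB l; rewrite /psi /= -L_eigenvalue_lc.
  by apply: iff_trans (phi_pres _ sB l) _; rewrite /L_spectrum L_eigenvalue_lc lc_invK.
have [psiE|psiE] := sym_pareto_preserverP psi_sym psi_lin psi_pres.
- exists 1, 0; split => //; left => A sA; apply: (can_inj (@lcK R)).
  by rewrite lc_phi psiE ?lc_conjP ?scale1 //; apply/sym2_lc.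
- exists 1, 0; split => //; right => A sA; apply: (can_inj (@lcK R)).
  by rewrite lc_phi psiE ?lc_conjQ ?scale1 //; apply/sym2_lc.
Qed.

End LorentzPreservers.

Theorem theorem1p1 (R : realType) :
  (forall phi : 'M[R]_2 -> 'M[R]_2,
     (forall (c : R) (A B : 'M[R]_2), phi (c *: A + B) = c *: phi A + phi B) ->
     ((forall A : 'M[R]_2, same_L_spectrum (phi A) A) <->
      exists a b : R, a ^+ 2 - b ^+ 2 = 1 /\
        ((forall A : 'M[R]_2, phi A = Pmx a b *m A *m invmx (Pmx a b)) \/
         (forall A : 'M[R]_2, phi A = Qmx a b *m A *m invmx (Qmx a b)))))
  /\
  (forall phi : 'M[R]_2 -> 'M[R]_2,
     (forall A : 'M[R]_2, sym2 A -> sym2 (phi A)) ->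
     (forall (c : R) (A B : 'M[R]_2), sym2 A -> sym2 B ->
        phi (c *: A + B) = c *: phi A + phi B) ->
     ((forall A : 'M[R]_2, sym2 A -> same_L_spectrum (phi A) A) <->
      exists a b : R, [/\ a ^+ 2 - b ^+ 2 = 1, b = 0 &
        ((forall A : 'M[R]_2, sym2 A ->
            phi A = Pmx a b *m A *m invmx (Pmx a b)) \/
         (forall A : 'M[R]_2, sym2 A ->
            phi A = Qmx a b *m A *m invmx (Qmx a b)))])).
Proof. by split=> phi; [exact: lorentz_preserverP | exact: sym_lorentz_preserverP]. Qed.
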